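(* Let $\beta\ge 2$ and let $Z_1,Z_2$ be finite sets with $Z_1\cap Z_2=\{u\}$. Let $\alpha_1:Z_1\to T_1$ and $\alpha_2:Z_2\to T_2$ be maps of $Z_1$, $Z_2$ to the leaves of $\beta$-HSTs $T_1,T_2$. Then there exist a $\beta$-HST $T$ and a map $\alpha:Z_1\cup Z_2\to T$ (to leaves of $T$) such that $d_\alpha(x,y)=d_{\alpha_1}(x,y)$ for all $x,y\in Z_1$, $d_\alpha(x,y)=d_{\alpha_2}(x,y)$ for all $x,y\in Z_2$, and $d_\alpha(x,y)\ge\max\{d_{\alpha_1}(x,u),d_{\alpha_2}(u,y)\}$ for all $x\in Z_1$, $y\in Z_2$. (That is, $\beta$-HSTs admit a perfect merge function.)
   Context: A $\beta$-HST is a metric on points mapped to the leaves of a rooted tree whose nodes $v$ carry values $\eta_v$ with $\eta_v=\beta\,\eta_u$ whenever $u$ is a child of $v$ and $\eta_v=1/\beta$ for every leaf $v$; the distance between two points is $\eta_z$ where $z$ is the least common ancestor of their leaves. For a map $\alpha$ into a $\beta$-HST, $d_\alpha(x,y)$ denotes the HST distance between the images of $x$ and $y$. *)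

From HB Require Import structures.
From mathcomp Require Import all_boot all_order all_algebra.
From mathcomp Require Import reals.
Set Implicit Arguments. Unset Strict Implicit. Unset Printing Implicit Defensive.
Import Order.TTheory GRing.Theory Num.Theory.
Local Open Scope ring_scope.

Record rtree := RTree {
  node : finType;
  root : node;
  parent : node -> node;
  parent_root : parent root = root;
  to_root : forall v : node, exists n, iter n parent v == root }.

Section Tree.
Variable t : rtree.

Definition child (u v : node t) : bool := (u != @root t) && (@parent t u == v).

Definition leaf (v : node t) : bool := [forall u, ~~ child u v].

Definition depth (v : node t) : nat := ex_minn (to_root v).

Definition ancestor (a v : node t) : bool :=
  [exists n : 'I_(depth v).+1, iter n (@parent t) v == a].

Definition lca (a b : node t) : node t :=
  [arg max_(z > @root t | ancestor z a && ancestor z b) depth z]%N.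
End Tree.

Definition is_hst (R : realType) (beta : R) (t : rtree) (eta : node t -> R) : Prop :=
  (forall u v : node t, child u v -> eta v = beta * eta u) /\
  (forall v : node t, leaf v -> eta v = beta^-1).

Definition hst_dist (R : realType) (t : rtree) (eta : node t -> R) (X : Type)
  (alpha : X -> node t) (x y : X) : R :=
  eta (lca (alpha x) (alpha y)).

From Pilot Require Import Defs.
From HB Require Import structures.
From mathcomp Require Import all_boot all_order all_algebra.
From mathcomp Require Import reals zify.
Set Implicit Arguments. Unset Strict Implicit. Unset Printing Implicit Defensive.
Import Order.TTheory GRing.Theory Num.Theory.
Local Open Scope ring_scope.

(* In a beta-HST with beta > 1 all leaves lie at the same depth, so the
   distance between two leaves is beta^(n-1), where n is the number of parent
   steps after which they meet; this meet level is an integer ultrametric.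
   Conversely every integer ultrametric on a finite set is the meet level of a
   beta-HST whose nodes at height k are the balls of radius k.  It therefore
   suffices to glue the two meet-level ultrametrics at u, setting
   d(x, y) = max (d1(x, u), d2(u, y)) across the two sides. *)

Record ultrametric_on (X : finType) (Z : {set X}) (d : X -> X -> nat) : Prop :=
  UltrametricOn {
    ultra0 : {in Z, forall x, d x x = 0%N};
    ultraC : {in Z &, forall x y, d x y = d y x};
    ultra_max : {in Z & &, forall x y z, d x z <= maxn (d x y) (d y z)}%N }.

Section RootedTree.
Variable t : rtree.
Local Notation parent := (@parent t).
Local Notation root := (Defs.root t).

Lemma iter_parent_root n : iter n parent root = root.
Proof. by elim: n => //= n ->; exact: parent_root. Qed.

Lemma iter_depth (v : node t) : iter (depth v) parent v = root.
Proof. by rewrite /depth; case: ex_minnP => n /eqP. Qed.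

Lemma depth_leq (v : node t) n : iter n parent v = root -> (depth v <= n)%N.
Proof. by rewrite /depth; case: ex_minnP => m _ min_m /eqP; exact: min_m. Qed.

Lemma iter_parent_ge_depth (v : node t) n :
  (depth v <= n)%N -> iter n parent v = root.
Proof. by move=> dvn; rewrite -(subnK dvn) iterD iter_depth iter_parent_root. Qed.

Lemma iter_parent_lt_depth (v : node t) n :
  (n < depth v)%N -> iter n parent v != root.
Proof. by move=> ndv; apply/eqP => /depth_leq; rewrite leqNgt ndv. Qed.

Lemma depth_iter_parent (v : node t) n :
  (n <= depth v)%N -> depth (iter n parent v) = (depth v - n)%N.
Proof.
move=> ndv; apply/eqP; rewrite eqn_leq; apply/andP; split.
  by apply: depth_leq; rewrite -iterD subnK // iter_depth.
by rewrite leq_subLR addnC; apply: depth_leq; rewrite iterD iter_depth.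
Qed.

Lemma ancestorP (z v : node t) :
  reflect (exists2 n, (n <= depth v)%N & iter n parent v = z) (ancestor z v).
Proof.
apply: (iffP existsP) => [[n /eqP <-]|[n ndv <-]].
  by exists n => //; rewrite -ltnS.
by exists (Ordinal (ndv : (n < (depth v).+1)%N)).
Qed.

Lemma meet_level_ex (a b : node t) : exists n, iter n parent a == iter n parent b.
Proof.
exists (maxn (depth a) (depth b)).
by rewrite !iter_parent_ge_depth ?leq_maxl ?leq_maxr.
Qed.

Definition meet_level (a b : node t) : nat := ex_minn (meet_level_ex a b).

Lemma meet_levelP a b : iter (meet_level a b) parent a = iter (meet_level a b) parent b.
Proof. by rewrite /meet_level; case: ex_minnP => n /eqP. Qed.

Lemma meet_level_leq a b n :
  iter n parent a = iter n parent b -> (meet_level a b <= n)%N.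
Proof. by rewrite /meet_level; case: ex_minnP => m _ min_m /eqP; exact: min_m. Qed.

Lemma iter_parent_ge_meet_level a b n :
  (meet_level a b <= n)%N -> iter n parent a = iter n parent b.
Proof. by move=> mn; rewrite -(subnK mn) !iterD meet_levelP. Qed.

Lemma meet_levelC a b : meet_level a b = meet_level b a.
Proof. by apply/eqP; rewrite eqn_leq !meet_level_leq // meet_levelP. Qed.

Lemma meet_levelxx a : meet_level a a = 0%N.
Proof. by apply/eqP; rewrite -leqn0 meet_level_leq. Qed.

Lemma meet_level_ult a b c :
  (meet_level a c <= maxn (meet_level a b) (meet_level b c))%N.
Proof.
apply: meet_level_leq.
rewrite (iter_parent_ge_meet_level (leq_maxl (meet_level a b) (meet_level b c))).
exact: iter_parent_ge_meet_level (leq_maxr _ _).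
Qed.

Lemma meet_level_ultrametric (X : finType) (Z : {set X}) (alpha : X -> node t) :
  ultrametric_on Z (fun x y => meet_level (alpha x) (alpha y)).
Proof.
split=> [x _ | x y _ _ | x y z _ _ _]; [exact: meet_levelxx | exact: meet_levelC |].
exact: meet_level_ult.
Qed.

Lemma common_ancestor_same_height (a b z : node t) :
  depth a = depth b -> ancestor z a -> ancestor z b ->
  exists2 n, (n <= depth a)%N & iter n parent a = z /\ iter n parent b = z.
Proof.
move=> dab /ancestorP [n na az] /ancestorP [m mb bz]; exists n => //.
suff nm : n = m by rewrite nm in az *.
have := congr1 (@depth t) (etrans az (esym bz)).
by rewrite !depth_iter_parent // dab; lia.
Qed.

Lemma lca_same_depth (a b : node t) :
  depth a = depth b -> lca a b = iter (meet_level a b) parent a.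
Proof.
move=> dab; have ml_a : (meet_level a b <= depth a)%N.
  by apply: meet_level_leq; rewrite !iter_parent_ge_depth // dab.
rewrite /lca; case: arg_maxnP.
  by apply/andP; split; apply/ancestorP; [exists (depth a) | exists (depth b)];
    rewrite ?iter_depth.
move=> z /andP [za zb] deepest.
have [n na [az bz]] := common_ancestor_same_height dab za zb; subst z.
have meet_anc : ancestor (iter (meet_level a b) parent a) a &&
                ancestor (iter (meet_level a b) parent a) b.
  by apply/andP; split; apply/ancestorP; exists (meet_level a b);
    rewrite ?meet_levelP -?dab.
have := deepest _ meet_anc; rewrite !depth_iter_parent // => dz.
have ml_n : (meet_level a b <= n)%N by apply: meet_level_leq; rewrite bz.
by congr iter; clear -dz na ml_n; lia.
Qed.

Variables (R : realType) (beta : R) (eta : node t -> R).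
Hypotheses (beta_gt1 : 1 < beta) (hst : is_hst beta eta).

Lemma eta_iter_parent (v : node t) n :
  (n <= depth v)%N -> eta (iter n parent v) = beta ^+ n * eta v.
Proof.
elim: n => [|n IHn] ndv; first by rewrite mul1r.
have ch : child (iter n parent v) (parent (iter n parent v)).
  by rewrite /child iter_parent_lt_depth // eqxx.
by rewrite iterS (hst.1 _ _ ch) IHn ?(ltnW ndv) // exprS mulrA.
Qed.

(* Every leaf gives eta root = beta ^+ depth * beta^-1, and beta > 1. *)
Lemma leaf_depth_eq (a b : node t) : leaf a -> leaf b -> depth a = depth b.
Proof.
move=> la lb; have := eta_iter_parent (leqnn (depth a)).
have := eta_iter_parent (leqnn (depth b)).
rewrite !iter_depth (hst.2 a la) (hst.2 b lb) => -> /mulIf.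
rewrite invr_eq0 gt_eqF ?(lt_trans ltr01 beta_gt1) // => /(_ isT) e.
by apply/eqP; rewrite eqn_leq -!(ler_eXn2l beta_gt1) e lexx.
Qed.

Lemma eta_lca_leaf (a b : node t) :
  leaf a -> leaf b -> eta (lca a b) = beta ^+ meet_level a b * beta^-1.
Proof.
move=> la lb; have dab := leaf_depth_eq la lb.
rewrite lca_same_depth // eta_iter_parent ?(hst.2 a la) //.
by apply: meet_level_leq; rewrite !iter_parent_ge_depth // dab.
Qed.

End RootedTree.

Section BallTree.
Variables (X : finType) (Z : {set X}) (u : X) (D : X -> X -> nat) (H : nat).
Hypotheses (uZ : u \in Z) (D_ultra : ultrametric_on Z D)
  (D_le : {in Z &, forall x y, D x y <= H}%N).
Local Notation Dxx := (ultra0 D_ultra).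
Local Notation DC := (ultraC D_ultra).
Local Notation D_ult := (ultra_max D_ultra).

Definition ball (x : X) (k : nat) : {set X} := [set y in Z | (D x y <= k)%N].

Lemma eq_ballE x y m : x \in Z -> y \in Z -> (ball x m == ball y m) = (D x y <= m)%N.
Proof.
move=> xZ yZ; apply/eqP/idP => [e | Dxy].
  have : y \in ball y m by rewrite inE yZ Dxx.
  by rewrite -e inE => /andP [].
apply/setP => z; rewrite !inE; case zZ: (z \in Z) => //=.
apply/idP/idP => Dz.
  by apply: leq_trans (D_ult yZ xZ zZ) _; rewrite geq_max Dz (DC yZ xZ) Dxy.
by apply: leq_trans (D_ult xZ yZ zZ) _; rewrite geq_max Dz Dxy.
Qed.

(* The node at height k <= H is a ball of radius k, tagged with k since balls
   of different radii may coincide as sets. *)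
Definition is_ball (q : 'I_H.+1 * {set X}) : bool := [exists x in Z, q.2 == ball x q.1].

Definition ball_node : finType := {q | is_ball q}.

Definition toZ (x : X) : X := if x \in Z then x else u.

Lemma toZ_in x : toZ x \in Z.
Proof. by rewrite /toZ; case: ifP. Qed.

Lemma toZ_id x : x \in Z -> toZ x = x.
Proof. by rewrite /toZ => ->. Qed.

Lemma is_ball_at x k : is_ball (inord (minn k H), ball (toZ x) (minn k H)).
Proof.
by apply/existsP; exists (toZ x); rewrite toZ_in /= inordK ?ltnS ?geq_minr.
Qed.

Definition ball_at (x : X) (k : nat) : ball_node := exist is_ball _ (is_ball_at x k).

Definition radius (v : ball_node) : nat := (val v).1.

Definition center (v : ball_node) : X :=
  odflt u [pick x in Z | (val v).2 == ball x (radius v)].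

Lemma radius_ball_at x k : radius (ball_at x k) = minn k H.
Proof. by rewrite /radius /= inordK // ltnS geq_minr. Qed.

Lemma radius_le v : (radius v <= H)%N.
Proof. by rewrite -ltnS /radius ltn_ord. Qed.

Lemma centerP v : center v \in Z /\ v = ball_at (center v) (radius v).
Proof.
rewrite /center; case: pickP => [x /andP [xZ /eqP e] | none] /=.
  split=> //; apply: val_inj => /=.
  rewrite toZ_id // (minn_idPl (radius_le v)) -e /radius inord_val.
  exact: surjective_pairing.
by case/existsP: (valP v) => x /andP [xZ e]; move: (none x); rewrite xZ e.
Qed.

Lemma eq_ball_atE x y k : x \in Z -> y \in Z ->
  (ball_at x k == ball_at y k) = (D x y <= minn k H)%N.
Proof.
move=> xZ yZ; rewrite -eq_ballE //.
apply/eqP/eqP => [/(congr1 (fun v => (val v).2)) /= | e].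
  by rewrite !toZ_id.
by apply: val_inj; rewrite /= !toZ_id // e.
Qed.

Lemma ball_at_minn x k : ball_at x (minn k H) = ball_at x k.
Proof. by apply: val_inj; rewrite /= -minnA minnn. Qed.

Lemma ball_at_ge x k : (H <= k)%N -> ball_at x k = ball_at u H.
Proof.
move=> Hk; apply: val_inj; rewrite /= (minn_idPr Hk) minnn (toZ_id uZ).
by congr (_, _); apply/eqP; rewrite eq_ballE ?toZ_in ?D_le ?toZ_in.
Qed.

Definition ball_parent (v : ball_node) : ball_node := ball_at (center v) (radius v).+1.

Lemma ball_parent_at x k : x \in Z -> ball_parent (ball_at x k) = ball_at x k.+1.
Proof.
move=> xZ; rewrite /ball_parent; case: (centerP (ball_at x k)) => cZ.
set c := center _ in cZ *; rewrite radius_ball_at ball_at_minn => /eqP.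
rewrite eq_ball_atE // => Dxc.
have [kH | Hk] := leqP H k; first by rewrite !ball_at_ge //; lia.
by apply/eqP; rewrite eq_ball_atE // DC //; apply: leq_trans Dxc _; lia.
Qed.

Lemma iter_ball_parent x k n :
  x \in Z -> iter n ball_parent (ball_at x k) = ball_at x (k + n).
Proof.
move=> xZ; elim: n => [|n IHn]; first by rewrite addn0.
by rewrite iterS IHn ball_parent_at // addnS.
Qed.

Lemma ball_parent_root : ball_parent (ball_at u H) = ball_at u H.
Proof. by rewrite ball_parent_at // ball_at_ge. Qed.

Lemma ball_parent_reach (v : ball_node) : exists n, iter n ball_parent v == ball_at u H.
Proof.
have [cZ ->] := centerP v; exists H.
by rewrite iter_ball_parent // ball_at_ge // leq_addl.
Qed.

Definition ball_tree : rtree := RTree ball_parent_root ball_parent_reach.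

Lemma child_radius (w v : node ball_tree) : child w v -> radius v = (radius w).+1.
Proof.
rewrite /child /= => /andP [w_root /eqP <-].
have [cZ e] := centerP w; rewrite /ball_parent radius_ball_at.
suff : (radius w < H)%N by lia.
rewrite ltn_neqAle radius_le andbT; apply: contraNneq w_root => rH.
by rewrite e rH ball_at_ge.
Qed.

Lemma leaf_radius (v : node ball_tree) : leaf v -> radius v = 0%N.
Proof.
move=> /forallP lv; have [cZ e] := centerP v.
case rv: (radius v) => [|k] //; have kH : (k < H)%N by rewrite -rv radius_le.
have := lv (ball_at (center v) k); rewrite /child /= ball_parent_at // -rv -e eqxx andbT.
apply: contraNeq => _; apply/eqP => /(congr1 radius).
by rewrite !radius_ball_at minnn; lia.
Qed.

Lemma leaf_ball_at0 x : leaf (ball_at x 0 : node ball_tree).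
Proof.
by apply/forallP => w; apply/negP => /child_radius; rewrite radius_ball_at min0n.
Qed.

Lemma meet_level_ball_at0 x y : x \in Z -> y \in Z ->
  meet_level (ball_at x 0 : node ball_tree) (ball_at y 0) = D x y.
Proof.
move=> xZ yZ; apply/eqP; rewrite eqn_leq; apply/andP; split.
  apply: meet_level_leq => /=; rewrite !iter_ball_parent // add0n.
  by apply/eqP; rewrite eq_ball_atE // (minn_idPl (D_le xZ yZ)).
have := meet_levelP (ball_at x 0 : node ball_tree) (ball_at y 0).
rewrite /= !iter_ball_parent // add0n => /eqP; rewrite eq_ball_atE //.
by move/leq_trans; apply; apply: geq_minl.
Qed.

Lemma hst_of_ultrametric (R : realType) (beta : R) :
  exists (t : rtree) (eta : node t -> R) (alpha : X -> node t),
    [/\ is_hst beta eta, (forall x, leaf (alpha x)) &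
        {in Z &, forall x y, meet_level (alpha x) (alpha y) = D x y}].
Proof.
exists ball_tree, (fun v => beta ^+ radius v * beta^-1), (ball_at^~ 0%N).
split; last 2 first.
- exact: leaf_ball_at0.
- exact: meet_level_ball_at0.
split=> [w v /child_radius -> | v /leaf_radius ->]; last by rewrite mul1r.
by rewrite exprS mulrA.
Qed.

End BallTree.

Section GlueUltrametrics.
Variables (X : finType) (Z1 Z2 : {set X}) (u : X) (d1 d2 : X -> X -> nat).
Hypotheses (Z1IZ2 : Z1 :&: Z2 = [set u])
  (ultra1 : ultrametric_on Z1 d1) (ultra2 : ultrametric_on Z2 d2).
Local Notation d1xx := (ultra0 ultra1).
Local Notation d1C := (ultraC ultra1).
Local Notation d1_ult := (ultra_max ultra1).
Local Notation d2xx := (ultra0 ultra2).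
Local Notation d2C := (ultraC ultra2).
Local Notation d2_ult := (ultra_max ultra2).

Lemma in_Z1Z2 x : x \in Z1 -> x \in Z2 -> x = u.
Proof. by move=> x1 x2; apply/set1P; rewrite -Z1IZ2 inE x1. Qed.

Lemma u_in_Z1 : u \in Z1.
Proof. by have := set11 u; rewrite -Z1IZ2 inE => /andP []. Qed.

Lemma u_in_Z2 : u \in Z2.
Proof. by have := set11 u; rewrite -Z1IZ2 inE => /andP []. Qed.

Definition dist_u (x : X) : nat := if x \in Z1 then d1 x u else d2 x u.

Definition glue (x y : X) : nat :=
  if (x \in Z1) && (y \in Z1) then d1 x y
  else if (x \in Z2) && (y \in Z2) then d2 x y
  else maxn (dist_u x) (dist_u y).

Lemma glue1 : {in Z1 &, forall x y, glue x y = d1 x y}.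
Proof. by move=> x y x1 y1; rewrite /glue x1 y1. Qed.

Lemma glue2 : {in Z2 &, forall x y, glue x y = d2 x y}.
Proof.
move=> x y x2 y2; rewrite /glue x2 y2; case: ifP => // /andP [x1 y1].
by rewrite (in_Z1Z2 x1 x2) (in_Z1Z2 y1 y2) d1xx ?d2xx ?u_in_Z1 ?u_in_Z2.
Qed.

Lemma dist_u1 : {in Z1, forall x, dist_u x = d1 x u}.
Proof. by move=> x x1; rewrite /dist_u x1. Qed.

Lemma dist_u2 : {in Z2, forall x, dist_u x = d2 x u}.
Proof.
move=> x x2; rewrite /dist_u; case: ifP => // x1.
by rewrite (in_Z1Z2 x1 x2) d1xx ?d2xx ?u_in_Z1 ?u_in_Z2.
Qed.

Lemma glueC x y : glue x y = glue y x.
Proof.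
rewrite /glue andbC (andbC (y \in Z2)); case: ifP => [/andP [x1 y1] | _].
  exact: d1C.
by case: ifP => [/andP [x2 y2] | _]; [exact: d2C | exact: maxnC].
Qed.

Lemma glue12 x y : x \in Z1 -> y \in Z2 -> glue x y = maxn (dist_u x) (dist_u y).
Proof.
move=> x1 y2; case y1: (y \in Z1).
  rewrite (in_Z1Z2 y1 y2) glue1 ?u_in_Z1 // !dist_u1 ?u_in_Z1 //.
  by rewrite d1xx ?u_in_Z1 // maxn0.
case x2: (x \in Z2).
  rewrite (in_Z1Z2 x1 x2) glue2 ?u_in_Z2 // !dist_u2 ?u_in_Z2 //.
  by rewrite d2xx ?u_in_Z2 // max0n d2C ?u_in_Z2.
by rewrite /glue x1 y1 x2.
Qed.

Lemma glue21 x y : x \in Z2 -> y \in Z1 -> glue x y = maxn (dist_u x) (dist_u y).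
Proof. by move=> x2 y1; rewrite glueC glue12 // maxnC. Qed.

Lemma glue_dist_u1 : {in Z1 &, forall x y,
  glue x y <= maxn (dist_u x) (dist_u y) /\ dist_u x <= maxn (glue x y) (dist_u y)}%N.
Proof.
move=> x y xZ yZ; rewrite glue1 // !dist_u1 //; split; last exact: d1_ult u_in_Z1.
by rewrite (d1C yZ u_in_Z1); exact: d1_ult u_in_Z1 _.
Qed.

Lemma glue_dist_u2 : {in Z2 &, forall x y,
  glue x y <= maxn (dist_u x) (dist_u y) /\ dist_u x <= maxn (glue x y) (dist_u y)}%N.
Proof.
move=> x y xZ yZ; rewrite glue2 // !dist_u2 //; split; last exact: d2_ult u_in_Z2.
by rewrite (d2C yZ u_in_Z2); exact: d2_ult u_in_Z2 _.
Qed.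

Lemma glue_le_max_dist_u : {in Z1 :|: Z2 &, forall x y,
  glue x y <= \max_z dist_u z}%N.
Proof.
move=> x y xZ yZ; apply: (@leq_trans (maxn (dist_u x) (dist_u y))).
  move: xZ yZ; rewrite !inE => /orP [] xZ /orP [] yZ.
  - by case: (glue_dist_u1 xZ yZ).
  - by rewrite glue12.
  - by rewrite glue21.
  - by case: (glue_dist_u2 xZ yZ).
by rewrite geq_max !leq_bigmax.
Qed.

Lemma glue_ult : {in Z1 :|: Z2 & &, forall x y z,
  glue x z <= maxn (glue x y) (glue y z)}%N.
Proof.
move=> x y z; rewrite !inE => /orP [] xZ /orP [] yZ /orP [] zZ.
- by rewrite !glue1 ?d1_ult.
- have := glue12 xZ zZ; have := glue12 yZ zZ; have := glue_dist_u1 xZ yZ; lia.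
- have := glue12 xZ yZ; have := glue21 yZ zZ; have := glue_dist_u1 xZ zZ; lia.
- have := glue12 xZ zZ; have := glue12 xZ yZ; rewrite (glueC y z).
  have := glue_dist_u2 zZ yZ; lia.
- have := glue21 xZ zZ; have := glue21 xZ yZ; rewrite (glueC y z).
  have := glue_dist_u1 zZ yZ; lia.
- have := glue21 xZ yZ; have := glue12 yZ zZ; have := glue_dist_u2 xZ zZ; lia.
- have := glue21 xZ zZ; have := glue21 yZ zZ; have := glue_dist_u2 xZ yZ; lia.
- by rewrite !glue2 ?d2_ult.
Qed.

Lemma glue_ultrametric : ultrametric_on (Z1 :|: Z2) glue.
Proof.
split=> [x | x y _ _ | ]; last exact: glue_ult; last exact: glueC.
by rewrite inE => /orP [] xZ; [rewrite glue1 ?d1xx | rewrite glue2 ?d2xx].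
Qed.

End GlueUltrametrics.

Theorem mainTheorem6 (R : realType) (beta : R) (X : finType)
  (Z1 Z2 : {set X}) (u : X)
  (t1 : rtree) (eta1 : node t1 -> R) (alpha1 : X -> node t1)
  (t2 : rtree) (eta2 : node t2 -> R) (alpha2 : X -> node t2) :
  2 <= beta ->
  (Z1 :&: Z2 = [set u])%SET ->
  is_hst beta eta1 -> (forall x, x \in Z1 -> leaf (alpha1 x)) ->
  is_hst beta eta2 -> (forall x, x \in Z2 -> leaf (alpha2 x)) ->
  exists (t : rtree) (eta : node t -> R) (alpha : X -> node t),
    [/\ is_hst beta eta,
        (forall x, x \in (Z1 :|: Z2)%SET -> leaf (alpha x)),
        (forall x y, x \in Z1 -> y \in Z1 ->
           hst_dist eta alpha x y = hst_dist eta1 alpha1 x y),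
        (forall x y, x \in Z2 -> y \in Z2 ->
           hst_dist eta alpha x y = hst_dist eta2 alpha2 x y) &
        (forall x y, x \in Z1 -> y \in Z2 ->
           Num.max (hst_dist eta1 alpha1 x u) (hst_dist eta2 alpha2 u y)
             <= hst_dist eta alpha x y)].
Proof.
move=> beta_ge2 Z1IZ2 hst1 leaf1 hst2 leaf2.
have beta_gt1 : 1 < beta by apply: lt_le_trans beta_ge2; rewrite ltr1n.
have ultra1 := meet_level_ultrametric Z1 alpha1.
have ultra2 := meet_level_ultrametric Z2 alpha2.
have u1 := u_in_Z1 Z1IZ2; have u2 := u_in_Z2 Z1IZ2.
have uZ : u \in Z1 :|: Z2 by rewrite inE u1.
have [t [eta [alpha [hst leaf_alpha meet_alpha]]]] := hst_of_ultrametric uZ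
  (glue_ultrametric Z1IZ2 ultra1 ultra2) (glue_le_max_dist_u Z1IZ2 ultra1 ultra2) beta.
exists t, eta, alpha; split=> // x y xZ yZ.
all: rewrite /hst_dist (eta_lca_leaf beta_gt1 hst) // meet_alpha ?inE ?xZ ?yZ ?orbT //.
- by rewrite glue1 // (eta_lca_leaf beta_gt1 hst1) ?leaf1.
- by rewrite glue2 // (eta_lca_leaf beta_gt1 hst2) ?leaf2.
rewrite glue12 // dist_u1 // (dist_u2 Z1IZ2) //=.
rewrite (eta_lca_leaf beta_gt1 hst1) ?leaf1 // (eta_lca_leaf beta_gt1 hst2) ?leaf2 //.
have beta_inv_gt0 : 0 < beta^-1 by rewrite invr_gt0 (lt_trans ltr01 beta_gt1).
rewrite ge_max !ler_pM2r // !ler_eXn2l // (meet_levelC (alpha2 u)).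
by rewrite leq_maxl leq_maxr.
Qed.
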